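(* Let $\pi$ be a projective plane of order $q$ and let $2\le n\le q$. Consider the complete bipartite graph $G=K_{n,q}$ with classes $U,V$, $|U|=n$, $|V|=q$. Then: (a) For $n=q$: $n_\pi(K_{q,q})=\binom{q^2+q+1}{2}$. (b) If $n<q$, and for every embedding $\phi$ of $K_{n,q}$ into $\pi$ the points of $\phi(V)$ lie on a line, then $n_\pi(K_{n,q})=2\binom{q^2+q+1}{2}\binom{q}{n}$. (c) If $n=q-1$, then for every embedding $\phi$ of $K_{q-1,q}$ into $\pi$ the points of $\phi(V)$ are collinear, and $n_\pi(K_{q-1,q})=q^2(q+1)(q^2+q+1)$.
   Context: A finite projective plane of order $q$ has $q^2+q+1$ points and lines, $q+1$ points on each line and $q+1$ lines through each point; any two distinct points lie on a unique line and any two lines meet in a unique point. An embedding of a simple graph $G=(V,E)$ into $\pi$ is an injective map $\phi$ from $V$ to the points of $\pi$ such that the induced map sending an edge $ab$ to the line through $\phi(a),\phi(b)$ is injective on $E$. Two embeddings $\phi,\psi$ are equivalent if $\psi=\phi\circ\alpha$ for some graph automorphism $\alpha$ of $G$; $n_\pi(G)$ is the number of equivalence classes of embeddings of $G$ into $\pi$ (equivalently, the number of distinct images, i.e. point sets $\phi(V)$ together with the line sets of embedded edges and induced incidence). *)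

From mathcomp Require Import all_boot all_order.
From mathcomp Require Import perm.
Set Implicit Arguments. Unset Strict Implicit. Unset Printing Implicit Defensive.

Definition proj_plane (q : nat) (P L : finType) (inc : P -> L -> bool) : Prop :=
  [/\ #|P| = q ^ 2 + q + 1, #|L| = q ^ 2 + q + 1,
      (forall l : L, #|[set p | inc p l]| = q.+1) /\
      (forall p : P, #|[set l | inc p l]| = q.+1),
      (forall p1 p2 : P, p1 != p2 -> exists! l : L, inc p1 l && inc p2 l) &
      (forall l1 l2 : L, l1 != l2 -> exists! p : P, inc p l1 && inc p l2)].

Definition line_through (P L : finType) (inc : P -> L -> bool) (p1 p2 : P)
  : option L := [pick l | inc p1 l && inc p2 l].

(* A simple graph on a finite vertex type V is given by a symmetric irreflexive
   relation e; its edges are the unordered pairs [set a; b] with e a b. *)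

(* Embedding: injective on vertices, and the induced edge -> line map is injective. *)
Definition embeddingb (P L : finType) (inc : P -> L -> bool) (V : finType)
  (e : rel V) (f : {ffun V -> P}) : bool :=
  injectiveb f &&
  [forall a, forall b, forall c, forall d,
     e a b ==> e c d ==>
     (line_through inc (f a) (f b) == line_through inc (f c) (f d)) ==>
     ([set a; b] == [set c; d])].

Definition embeddings (P L : finType) (inc : P -> L -> bool) (V : finType)
  (e : rel V) : {set {ffun V -> P}} := [set f | embeddingb inc e f].

Definition graph_aut (V : finType) (e : rel V) : {set {perm V}} :=
  [set s : {perm V} | [forall x, forall y, e (s x) (s y) == e x y]].

(* n_pi(G): number of equivalence classes of embeddings, phi ~ phi \o alpha. *)
Definition n_pi (P L : finType) (inc : P -> L -> bool) (V : finType) (e : rel V)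
  : nat :=
  #|[set [set [ffun x => f (s x)] | s : {perm V} in graph_aut e] | f : {ffun V -> P} in embeddings inc e]|.

(* Complete bipartite graph K_{n,m} with classes U = 'I_n (inl), V = 'I_m (inr). *)
Definition Kbip (n m : nat) : rel ('I_n + 'I_m)%type :=
  fun x y => match x, y with
             | inl _, inr _ | inr _, inl _ => true
             | _, _ => false
             end.
Arguments Kbip : clear implicits.

From mathcomp Require Import all_boot all_order perm zify.
Set Implicit Arguments. Unset Strict Implicit. Unset Printing Implicit Defensive.

(* Automorphisms of K_{n,q} preserve or swap its two parts, so two embeddings are
   equivalent iff they have the same unordered pair {phi(U), phi(V)} of image sets.
   If phi(V) lies on a line l, it fills l except one point Z, and every line through
   two images of U passes through Z; hence phi(U) lies on a line m through Z, and the
   pair is (A, l \ m) with A an n-subset of m \ l.  Conversely every such pair of sets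
   is the image of an embedding.  With N = q^2 + q + 1 lines, for n < q the pair
   determines (l, m, A), giving N (N - 1) C(q, n) classes; for n = q we have A = m \ l
   and the pair corresponds to {l, m}, giving C(N, 2).  When n >= q - 1 the hypothesis
   on phi(V) is automatic: the q + 1 lines through an image of U are the q lines to
   phi(V) and one line m carrying all of phi(U); at most two points of m avoid phi(U),
   whereas an image of V off the line through two others would produce three. *)

Lemma card_imset_same_kernel (T A B : finType) (E : {set T}) (a : T -> A) (b : T -> B) :
  {in E &, forall x y, (a x == a y) = (b x == b y)} -> #|a @: E| = #|b @: E|.
Proof.
move=> same_ker; case: (set_0Vmem E) => [E0|[x0 x0E]].
  by rewrite E0 (imset0 a) (imset0 b) !cards0.
pose c y := b (odflt x0 [pick x in E | a x == y]).
have cE x : x \in E -> c (a x) = b x.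
  move=> xE; rewrite /c; case: pickP => [x' /andP[x'E /eqP e]|none] /=.
    by apply/eqP; rewrite -same_ker // e.
  by have := none x; rewrite xE eqxx.
have -> : b @: E = c @: (a @: E).
  by rewrite -imset_comp; apply: eq_in_imset => x xE /=; rewrite cE.
rewrite [RHS]card_in_imset // => _ _ /imsetP[x1 x1E ->] /imsetP[x2 x2E ->].
by rewrite !cE // => /eqP; rewrite -same_ker // => /eqP.
Qed.

Lemma sum_pred_card (T : finType) (p : pred T) : \sum_(x : T) (p x : nat) = #|[set x | p x]|.
Proof. by rewrite -sum1dep_card [RHS]big_mkcond; apply: eq_bigr => x _; case: (p x). Qed.

Lemma sum_pair (I J : finType) (F : I * J -> nat) : \sum_x F x = \sum_i \sum_j F (i, j).
Proof. by rewrite pair_bigA; apply: eq_bigr => -[i j]. Qed.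

Lemma set2_eq (T : finType) (a b c d : T) :
  [set a; b] = [set c; d] -> (a = c /\ b = d) \/ (a = d /\ b = c).
Proof.
move=> e.
have : a \in [set c; d] by rewrite -e set21.
have : b \in [set c; d] by rewrite -e set22.
have : c \in [set a; b] by rewrite e set21.
have : d \in [set a; b] by rewrite e set22.
by rewrite !inE => /orP[]/eqP? /orP[]/eqP? /orP[]/eqP? /orP[]/eqP?; subst; auto.
Qed.

Definition is_inl (A B : Type) (x : A + B) : bool := if x is inl _ then true else false.

Section CompleteBipartite.
Variables (T : finType) (n m : nat).
Implicit Types (f g : {ffun 'I_n + 'I_m -> T}) (s : {perm 'I_n + 'I_m}).

Lemma KbipE x y : Kbip n m x y = (is_inl x != is_inl y).
Proof. by case: x; case: y. Qed.

Lemma Kbip_neq x y : Kbip n m x y -> x != y.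
Proof. by apply: contraTneq => ->; rewrite KbipE eqxx. Qed.

Definition part b : {set 'I_n + 'I_m} := [set x | is_inl x == b].
Definition side f b := f @: part b.
Definition sides f := [set side f true; side f false].
Definition orbit f :=
  [set [ffun x => f (s x)] | s : {perm 'I_n + 'I_m} in graph_aut (Kbip n m)].

Lemma side_trueE f : side f true = [set f (inl i) | i : 'I_n].
Proof.
apply/setP => p; apply/imsetP/imsetP => [[[i|j]]|[i _ ->]]; rewrite ?inE //.
  by move=> _ ->; exists i.
by exists (inl i); rewrite ?inE.
Qed.

Lemma side_falseE f : side f false = [set f (inr j) | j : 'I_m].
Proof.
apply/setP => p; apply/imsetP/imsetP => [[[i|j]]|[j _ ->]]; rewrite ?inE //.
  by move=> _ ->; exists j.
by exists (inr j); rewrite ?inE.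
Qed.

Lemma card_side f b : injective f -> #|side f b| = if b then n else m.
Proof.
move=> finj; case: b; rewrite ?side_trueE ?side_falseE card_imset ?card_ord //.
  by move=> i j /finj [].
by move=> i j /finj [].
Qed.

Lemma graph_aut_KbipP s :
  reflect (exists c, forall x, is_inl (s x) = is_inl x (+) c) (s \in graph_aut (Kbip n m)).
Proof.
rewrite inE; apply: (iffP forallP) => [aut | [c shift] x].
  case: (pickP (predT : pred ('I_n + 'I_m))) => [x0 _ | empty]; last first.
    by exists false => x; have := empty x.
  exists (is_inl (s x0) (+) is_inl x0) => x.
  have /forallP/(_ x0)/eqP := aut x; rewrite !KbipE.
  by case: (is_inl (s x)); case: (is_inl (s x0)); case: (is_inl x); case: (is_inl x0).
apply/forallP => y; rewrite !KbipE !shift.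
by case: c {shift}; case: (is_inl x); case: (is_inl y).
Qed.

Lemma side_perm f s c b : (forall x, is_inl (s x) = is_inl x (+) c) ->
  side [ffun x => f (s x)] b = side f (b (+) c).
Proof.
move=> shift; rewrite /side (eq_imset _ (fun x => ffunE _ x)) imset_comp.
suff -> : s @: part b = part (b (+) c) by [].
apply/setP => y; apply/imsetP/idP => [[x + ->]|yb].
  by rewrite /part !inE shift => /eqP ->.
exists (s^-1 y)%g; last by rewrite permKV.
move: yb; rewrite /part !inE; have := shift (s^-1 y)%g; rewrite permKV => ->.
by case: c {shift}; case: (is_inl _); case: b.
Qed.

Lemma sides_aut f s : s \in graph_aut (Kbip n m) -> sides [ffun x => f (s x)] = sides f.
Proof.
case/graph_aut_KbipP => c shift; rewrite /sides !(side_perm f _ shift).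
by case: c {shift}; rewrite //= setUC.
Qed.

Lemma aut_of_sides f g c : injective f -> injective g ->
  (forall b, side g b = side f (b (+) c)) ->
  exists2 s, s \in graph_aut (Kbip n m) & g = [ffun x => f (s x)].
Proof.
move=> finj ginj eside.
have pre x : exists y, g x = f y /\ is_inl y = is_inl x (+) c.
  have : g x \in side g (is_inl x) by apply: imset_f; rewrite inE.
  by rewrite eside => /imsetP[y]; rewrite inE => /eqP <- ->; exists y.
pose s0 x := odflt x [pick y | f y == g x].
have s0E x : g x = f (s0 x) /\ is_inl (s0 x) = is_inl x (+) c.
  have [y [gx shift]] := pre x; rewrite /s0; case: pickP => [y' /eqP e|none].
    by rewrite (finj _ _ (etrans e gx)).
  by have := none y; rewrite gx eqxx.
have s0_inj : injective s0.
  by move=> x x' e; apply: ginj; rewrite (s0E x).1 (s0E x').1 e.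
exists (perm s0_inj).
  by apply/graph_aut_KbipP; exists c => x; rewrite permE (s0E x).2.
by apply/ffunP => x; rewrite ffunE permE (s0E x).1.
Qed.

Lemma orbitE f : injective f ->
  orbit f = [set g : {ffun _ -> T} | injectiveb g && (sides g == sides f)].
Proof.
move=> finj; apply/setP => g; rewrite inE.
apply/imsetP/andP => [[s aut ->] | [/injectiveP ginj /eqP e]].
  rewrite sides_aut // eqxx; split=> //.
  by apply/injectiveP => x y; rewrite !ffunE => /finj/perm_inj.
case: (set2_eq e) => -[etrue efalse].
  by apply: (aut_of_sides (c := false)) => // -[].
by apply: (aut_of_sides (c := true)) => // -[].
Qed.

Lemma card_orbits (E : {set {ffun 'I_n + 'I_m -> T}}) :
  {in E, forall f, injective f} -> #|[set orbit f | f in E]| = #|sides @: E|.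
Proof.
move=> Einj; apply: card_imset_same_kernel => f g fE gE.
rewrite (orbitE (Einj f fE)) (orbitE (Einj g gE)).
apply/eqP/eqP => [e | ->] //.
have : f \in [set h : {ffun _ -> T} | injectiveb h && (sides h == sides f)].
  by rewrite inE eqxx andbT; apply/injectiveP; exact: Einj.
by rewrite e inE => /andP[_ /eqP].
Qed.

End CompleteBipartite.

Lemma exists_sides (T : finType) n m (A B : {set T}) :
  #|A| = n -> #|B| = m -> [disjoint A & B] ->
  exists f : {ffun 'I_n + 'I_m -> T}, [/\ injective f, side f true = A & side f false = B].
Proof.
move=> <- <- AB.
have enumE (C : {set T}) : [set enum_val i | i : 'I_#|C|] = C.
  apply/setP => x; apply/imsetP/idP => [[i _ ->]|xC]; first exact: enum_valP.
  by exists (enum_rank_in xC x); rewrite ?enum_rankK_in.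
exists [ffun x => match x with inl i => enum_val i | inr j => enum_val j end].
rewrite side_trueE side_falseE; split.
- have AB' i j : @enum_val _ (mem A) i != @enum_val _ (mem B) j.
    by apply: contraTneq (enum_valP j) => <-; rewrite (disjointFr AB) ?enum_valP.
  move=> [i|j] [i'|j']; rewrite !ffunE => e.
  + by rewrite (enum_val_inj e).
  + by move: (AB' i j'); rewrite e eqxx.
  + by move: (AB' i' j); rewrite e eqxx.
  + by rewrite (enum_val_inj e).
- by rewrite -[RHS]enumE; apply: eq_imset => i; rewrite ffunE.
- by rewrite -[RHS]enumE; apply: eq_imset => i; rewrite ffunE.
Qed.

Section ProjectivePlane.
Variables (q : nat) (P L : finType) (inc : P -> L -> bool).
Hypothesis plane : proj_plane q inc.

Definition pts l := [set p | inc p l].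

Lemma card_pts l : #|pts l| = q.+1.
Proof. by case: plane => _ _ [-> _]. Qed.

Lemma card_lines_through p : #|[set l | inc p l]| = q.+1.
Proof. by case: plane => _ _ [_ ->]. Qed.

Lemma card_lines : #|L| = q ^ 2 + q + 1.
Proof. by case: plane. Qed.

Lemma line_unique p1 p2 l l' : p1 != p2 ->
  inc p1 l -> inc p2 l -> inc p1 l' -> inc p2 l' -> l = l'.
Proof.
move=> p12 h1 h2 h1' h2'; case: plane => _ _ _ /(_ _ _ p12)[l0 [_ uniq]] _.
by rewrite -(uniq l) ?h1 ?h2 // -(uniq l') ?h1' ?h2'.
Qed.

Lemma point_unique l1 l2 p p' : l1 != l2 ->
  inc p l1 -> inc p l2 -> inc p' l1 -> inc p' l2 -> p = p'.
Proof.
move=> l12 h1 h2 h1' h2'; case: plane => _ _ _ _ /(_ _ _ l12)[p0 [_ uniq]].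
by rewrite -(uniq p) ?h1 ?h2 // -(uniq p') ?h1' ?h2'.
Qed.

Lemma exists_line p1 p2 : exists l, inc p1 l && inc p2 l.
Proof.
case: (eqVneq p1 p2) => [<-|p12].
  have : 0 < #|[set l | inc p1 l]| by rewrite card_lines_through.
  by case/card_gt0P => l; rewrite inE => h; exists l; rewrite h.
by case: plane => _ _ _ /(_ _ _ p12)[l [h _]] _; exists l.
Qed.

Lemma exists_point l1 l2 : l1 != l2 -> exists p, inc p l1 && inc p l2.
Proof. by move=> l12; case: plane => _ _ _ _ /(_ _ _ l12)[p [h _]]; exists p. Qed.

Lemma line_throughE p1 p2 l : p1 != p2 -> inc p1 l -> inc p2 l ->
  line_through inc p1 p2 = Some l.
Proof.
move=> p12 h1 h2; rewrite /line_through; case: pickP => [l' /andP[h1' h2'] | none].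
  by rewrite (line_unique p12 h1' h2' h1 h2).
by have := none l; rewrite h1 h2.
Qed.

Lemma card_ptsD l m : l != m -> #|pts m :\: pts l| = q.
Proof.
move=> lm; rewrite cardsD card_pts.
have [p /andP[pl pm]] := exists_point lm.
suff -> : pts m :&: pts l = [set p] by rewrite cards1 subn1.
apply/setP => x; rewrite !inE; apply/andP/eqP => [[xm xl]|->]; last by rewrite pl pm.
exact: (point_unique lm xl xm pl pm).
Qed.

Lemma line_eq_of_subset (A : {set P}) l l' : 1 < #|A| ->
  A \subset pts l -> A \subset pts l' -> l = l'.
Proof.
case/card_gt1P => x [y [xA yA xy]] /subsetP Al /subsetP Al'.
apply: (line_unique xy).
- by have := Al x xA; rewrite inE.
- by have := Al y yA; rewrite inE.
- by have := Al' x xA; rewrite inE.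
- by have := Al' y yA; rewrite inE.
Qed.

Definition Kbip_embedding n m (f : {ffun 'I_n + 'I_m -> P}) : Prop :=
  [/\ injective f,
      forall i j j' l, j != j' ->
        inc (f (inl i)) l -> inc (f (inr j)) l -> inc (f (inr j')) l -> False &
      forall i i' j l, i != i' ->
        inc (f (inl i)) l -> inc (f (inl i')) l -> inc (f (inr j)) l -> False].

Lemma Kbip_embedding_line n m (f : {ffun 'I_n + 'I_m -> P}) i j l x :
  Kbip_embedding f -> inc (f (inl i)) l -> inc (f (inr j)) l -> inc (f x) l ->
  x \in [set inl i; inr j].
Proof.
case=> _ no_UVV no_UUV hu hv; rewrite !inE.
case: x => [i'|j'] hx /=.
  case: (eqVneq i i') => [-> | ne]; first by rewrite eqxx.
  by case: (no_UUV _ _ _ _ ne hu hx hv).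
case: (eqVneq j j') => [-> | ne]; first by rewrite eqxx ?orbT.
by case: (no_UVV _ _ _ _ ne hu hv hx).
Qed.

Lemma Kbip_edge n m (a b : 'I_n + 'I_m) : Kbip n m a b ->
  exists i j, [set a; b] = [set inl i; inr j].
Proof.
by case: a => [i|j]; case: b => [i'|j'] //= _; [exists i, j' | exists i', j; rewrite setUC].
Qed.

Lemma embeddingP n m (f : {ffun 'I_n + 'I_m -> P}) :
  f \in embeddings inc (Kbip n m) <-> Kbip_embedding f.
Proof.
rewrite inE /embeddingb; split => [/andP[/injectiveP finj /forallP emb] | femb].
  have edge_lines a b c d l : Kbip n m a b -> Kbip n m c d ->
      inc (f a) l -> inc (f b) l -> inc (f c) l -> inc (f d) l -> [set a; b] = [set c; d].
    move=> ab cd ha hb hc hd.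
    have fab : f a != f b by rewrite (inj_eq finj) Kbip_neq.
    have fcd : f c != f d by rewrite (inj_eq finj) Kbip_neq.
    have /forallP/(_ b)/forallP/(_ c)/forallP/(_ d) := emb a.
    by rewrite ab cd (line_throughE fab ha hb) (line_throughE fcd hc hd) eqxx => /eqP.
  split=> // [i j j' l ne hu hv hv' | i i' j l ne hu hu' hv].
    have := edge_lines (inl i) (inr j) (inl i) (inr j') l isT isT hu hv hu hv'.
    move=> /setP/(_ (inr j')).
    by rewrite !inE eqxx orbT /= => /eqP[e]; rewrite e eqxx in ne.
  have := edge_lines (inl i) (inr j) (inl i') (inr j) l isT isT hu hv hu' hv.
  move=> /setP/(_ (inl i')).
  by rewrite !inE eqxx /= orbF => /eqP[e]; rewrite e eqxx in ne.
have [finj _ _] := femb; apply/andP; split; first exact/injectiveP.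
apply/forallP => a; apply/forallP => b; apply/forallP => c; apply/forallP => d.
apply/implyP => ab; apply/implyP => cd; apply/implyP => /eqP el.
have fab : f a != f b by rewrite (inj_eq finj) Kbip_neq.
have fcd : f c != f d by rewrite (inj_eq finj) Kbip_neq.
have [l /andP[ha hb]] := exists_line (f a) (f b).
have [l' /andP[hc hd]] := exists_line (f c) (f d).
move: el; rewrite (line_throughE fab ha hb) (line_throughE fcd hc hd) => -[el'].
rewrite -el' in hc hd.
have [i [j eab]] := Kbip_edge ab.
have on_l x : x \in [set a; b] -> inc (f x) l by rewrite !inE => /orP[]/eqP->.
have hu : inc (f (inl i)) l by apply: on_l; rewrite eab set21.
have hv : inc (f (inr j)) l by apply: on_l; rewrite eab set22.
have sub : [set c; d] \subset [set a; b].
  by rewrite eab; apply/subsetP => x /set2P[]->; apply: Kbip_embedding_line femb hu hv _.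
by rewrite eq_sym eqEcard sub !cards2 (Kbip_neq cd); case: (a != b).
Qed.

Lemma embedding_placement n (f : {ffun 'I_n + 'I_q -> P}) l :
  1 < n -> 1 < q -> Kbip_embedding f -> (forall j, inc (f (inr j)) l) ->
  exists m, [/\ l != m, side f false = pts l :\: pts m & side f true \subset pts m :\: pts l].
Proof.
move=> n_gt1 q_gt1 femb Vl; have [finj no_UVV no_UUV] := femb.
pose i0 : 'I_n := Ordinal (ltnW n_gt1); pose i1 : 'I_n := Ordinal n_gt1.
pose j0 : 'I_q := Ordinal (ltnW q_gt1); pose j1 : 'I_q := Ordinal q_gt1.
have U_off_l i : ~~ inc (f (inl i)) l by apply/negP => h; apply: (no_UVV i j0 j1 l).
have cardV := card_side false finj; rewrite side_falseE in cardV *; rewrite side_trueE.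
set V := [set f (inr j) | j : 'I_q] in cardV *.
have Vl' : V \subset pts l by apply/subsetP => p /imsetP[j _ ->]; rewrite inE.
have /cards1P[Z lZ] : #|pts l :\: V| == 1.
  by rewrite cardsD (setIidPr Vl') card_pts cardV subSnn.
have Z_unique X : inc X l -> X \notin V -> X = Z.
  by move=> h1 h2; apply/set1P; rewrite -lZ !inE h1 h2.
have Zl : inc Z l by have := set11 Z; rewrite -lZ !inE => /andP[_ ->].
have u0Z : f (inl i0) != Z by apply: contraNneq (U_off_l i0) => ->.
have [m /andP[u0m Zm]] := exists_line (f (inl i0)) Z.
have Um i : inc (f (inl i)) m.
  case: (eqVneq i i0) => [-> //|ne].
  have u0u : f (inl i0) != f (inl i).
    by rewrite (inj_eq finj); apply: contraNneq ne => -[->].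
  have [k /andP[u0k uk]] := exists_line (f (inl i0)) (f (inl i)).
  have kl : k != l by apply: contraNneq (U_off_l i0) => <-.
  have [X /andP[Xk Xl]] := exists_point kl.
  have XV : X \notin V.
    apply/imsetP => -[j _ eX]; rewrite {}eX in Xk.
    by apply: (no_UUV i0 i j k) => //; rewrite eq_sym.
  rewrite (Z_unique X Xl XV) in Xk.
  by rewrite (line_unique u0Z u0m Zm u0k Xk).
have lm : l != m by apply: contraNneq (U_off_l i0) => ->.
exists m; split => //.
  apply/eqP; rewrite eqEcard cardV card_ptsD 1?eq_sym // leqnn andbT.
  apply/subsetP => p /imsetP[j _ ->]; rewrite !inE Vl andbT.
  by apply/negP => h; apply: (no_UUV i0 i1 j m).
by apply/subsetP => p /imsetP[i _ ->]; rewrite !inE Um (U_off_l i).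
Qed.

Lemma embedding_U_collinear n (f : {ffun 'I_n + 'I_q -> P}) : 1 < n -> Kbip_embedding f ->
  exists m, (forall i, inc (f (inl i)) m) /\ (forall j, ~~ inc (f (inr j)) m).
Proof.
move=> n_gt1 femb; have [finj no_UVV no_UUV] := femb.
pose i0 : 'I_n := Ordinal (ltnW n_gt1); pose i1 : 'I_n := Ordinal n_gt1.
set u0 := f (inl i0).
have [m /andP[u0m u1m]] := exists_line u0 (f (inl i1)).
have V_off_m j : ~~ inc (f (inr j)) m by apply/negP => h; apply: (no_UUV i0 i1 j m).
pose to_V j := odflt m (line_through inc u0 (f (inr j))).
have to_VP j : inc u0 (to_V j) && inc (f (inr j)) (to_V j).
  have u0v : u0 != f (inr j) by rewrite (inj_eq finj).
  have [k /andP[h1 h2]] := exists_line u0 (f (inr j)).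
  by rewrite /to_V (line_throughE u0v h1 h2) /= h1 h2.
have to_V_inj : injective to_V.
  move=> j j' e; case: (eqVneq j j') => // ne; exfalso.
  have /andP[h1 h2] := to_VP j; have /andP[_ h2'] := to_VP j'.
  by apply: (no_UVV i0 j j' (to_V j) ne h1 h2); rewrite e.
have m_to_V : m \notin [set to_V j | j : 'I_q].
  apply/imsetP => -[j _ e]; have /andP[_ h] := to_VP j.
  by apply: (no_UUV i0 i1 j m) => //; rewrite e.
have lines_u0 : [set l | inc u0 l] = m |: [set to_V j | j : 'I_q].
  apply/eqP; rewrite eq_sym eqEcard cardsU1 m_to_V card_imset // card_ord.
  rewrite card_lines_through leqnn andbT.
  apply/subsetP => k; rewrite !inE => /orP[/eqP -> // | /imsetP[j _ ->]].
  by case/andP: (to_VP j).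
have Um i : inc (f (inl i)) m.
  case: (eqVneq i i0) => [-> //|ne].
  have [k /andP[u0k uk]] := exists_line u0 (f (inl i)).
  have : k \in [set l | inc u0 l] by rewrite inE.
  rewrite lines_u0 !inE => /orP[/eqP <- // | /imsetP[j _ ek]].
  have /andP[_ vk] := to_VP j; exfalso; apply: (no_UUV i0 i j k) => //.
    by rewrite eq_sym.
  by rewrite ek.
by exists m.
Qed.

Lemma embedding_V_collinear n (f : {ffun 'I_n + 'I_q -> P}) :
  1 < n -> 1 < q -> q <= n.+1 -> Kbip_embedding f -> exists l, forall j, inc (f (inr j)) l.
Proof.
move=> n_gt1 q_gt1 q_le femb; have [finj no_UVV _] := femb.
have [m [Um V_off_m]] := embedding_U_collinear n_gt1 femb.
pose j0 : 'I_q := Ordinal (ltnW q_gt1); pose j1 : 'I_q := Ordinal q_gt1.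
pose W := pts m :\: side f true.
have card_W : #|W| <= 2.
  have Um' : side f true \subset pts m.
    by rewrite side_trueE; apply/subsetP => p /imsetP[i _ ->]; rewrite inE.
  rewrite cardsD (setIidPr Um') card_pts card_side //; lia.
have W_m X : X \in W -> inc X m by rewrite !inE => /andP[_].
have meet j j' : j != j' ->
    exists k X, [/\ inc (f (inr j)) k, inc (f (inr j')) k, inc X k & X \in W].
  move=> ne; have [k /andP[h1 h2]] := exists_line (f (inr j)) (f (inr j')).
  have km : k != m by apply: contraNneq (V_off_m j) => <-.
  have [X /andP[Xk Xm]] := exists_point km.
  exists k, X; split => //; rewrite /W side_trueE !inE Xm andbT.
  by apply/imsetP => -[i _ eX]; rewrite eX in Xk; apply: (no_UVV i j j' k ne Xk h1 h2).
have j01 : j0 != j1 by [].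
have [l [X0 [v0l v1l X0l W0]]] := meet j0 j1 j01.
exists l => j; apply/negPn/negP => vj_off_l.
have ne0 : j != j0 by apply: contraNneq vj_off_l => ->.
have ne1 : j != j1 by apply: contraNneq vj_off_l => ->.
have [k1 [X1 [vk1 v0k1 X1k1 W1]]] := meet j j0 ne0.
have [k2 [X2 [vk2 v1k2 X2k2 W2]]] := meet j j1 ne1.
have V_off_W j' X : X \in W -> f (inr j') != X.
  by move/W_m => Xm; apply: contraNneq (V_off_m j') => ->.
have X10 : X1 != X0.
  apply: contraNneq vj_off_l => e; rewrite e in X1k1.
  by rewrite (line_unique (V_off_W j0 X0 W0) v0k1 X1k1 v0l X0l) in vk1.
have X20 : X2 != X0.
  apply: contraNneq vj_off_l => e; rewrite e in X2k2.
  by rewrite (line_unique (V_off_W j1 X0 W0) v1k2 X2k2 v1l X0l) in vk2.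
have X12 : X1 = X2.
  apply/eqP; apply: contraTT card_W => ne12; rewrite -ltnNge.
  have sub : X0 |: [set X1; X2] \subset W by apply/subsetP => x /setU1P[->|/set2P[]->].
  apply: leq_trans (subset_leq_card sub).
  by rewrite cardsU1 cards2 !inE ne12 !(eq_sym X0) (negbTE X10) (negbTE X20).
rewrite -X12 in X2k2.
rewrite -(line_unique (V_off_W j X1 W1) vk1 X1k1 vk2 X2k2) in v1k2.
have v01 : f (inr j0) != f (inr j1) by rewrite (inj_eq finj).
by rewrite (line_unique v01 v0k1 v1k2 v0l v1l) in vk1; rewrite vk1 in vj_off_l.
Qed.

Lemma placement_embedding n k (f : {ffun 'I_n + 'I_k -> P}) l m :
  injective f -> side f true \subset pts m :\: pts l ->
  side f false \subset pts l :\: pts m -> Kbip_embedding f.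
Proof.
rewrite side_trueE side_falseE => finj /subsetP U_ml /subsetP V_lm.
have hu i : ~~ inc (f (inl i)) l && inc (f (inl i)) m.
  by have := U_ml _ (imset_f _ (isT : i \in 'I_n)); rewrite !inE.
have hv j : ~~ inc (f (inr j)) m && inc (f (inr j)) l.
  by have := V_lm _ (imset_f _ (isT : j \in 'I_k)); rewrite !inE.
split=> // [i j j' k' ne hu' hv1 hv2 | i i' j k' ne hu1 hu2 hv'].
  have fjj' : f (inr j) != f (inr j').
    by rewrite (inj_eq finj); apply: contraNneq ne => -[->].
  have /andP[_ vl] := hv j; have /andP[_ vl'] := hv j'.
  rewrite (line_unique fjj' hv1 hv2 vl vl') in hu'.
  by case/andP: (hu i) => /negP.
have fii' : f (inl i) != f (inl i').
  by rewrite (inj_eq finj); apply: contraNneq ne => -[->].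
have /andP[_ um] := hu i; have /andP[_ um'] := hu i'.
rewrite (line_unique fii' hu1 hu2 um um') in hv'.
by case/andP: (hv j) => /negP.
Qed.

(* [(l, m, A)] stands for the embeddings mapping U onto [A] and V onto [pts l :\: pts m]. *)
Definition placements n := [set x : L * L * {set P} |
  [&& x.1.1 != x.1.2, x.2 \subset pts x.1.2 :\: pts x.1.1 & #|x.2| == n]].

Definition placement_sides (x : L * L * {set P}) := [set x.2; pts x.1.1 :\: pts x.1.2].

Lemma card_placements n : #|placements n| = #|L| * #|L|.-1 * 'C(q, n).
Proof.
rewrite -sum_pred_card sum_pair.
transitivity (\sum_(lm : L * L) (lm.1 != lm.2) * 'C(q, n)).
  apply: eq_bigr => -[l m] _ /=.
  case: (eqVneq l m) => [->|lm] /=; first by rewrite big1.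
  by rewrite mul1n sum_pred_card cards_draws card_ptsD.
rewrite -big_distrl sum_pair /=; congr (_ * _).
transitivity (\sum_(l : L) #|L|.-1).
  apply: eq_bigr => l _; rewrite sum_pred_card -(cardsC1 l).
  by apply: eq_card => m; rewrite !inE eq_sym.
by rewrite sum_nat_const mulnC.
Qed.

Definition V_collinear n := forall f : {ffun 'I_n + 'I_q -> P},
  f \in embeddings inc (Kbip n q) -> exists l, forall v, inc (f (inr v)) l.

Lemma sides_embeddings n : 1 < n -> 1 < q ->
  V_collinear n ->
  [set sides f | f in embeddings inc (Kbip n q)] = placement_sides @: placements n.
Proof.
move=> n_gt1 q_gt1 colV.
apply/setP => S; apply/imsetP/imsetP => [[f fE ->]|[[[l m] A] + ->]].
  have [l Vl] := colV f fE; have /embeddingP femb := fE; have [finj _ _] := femb.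
  have [m [lm eV eU]] := embedding_placement n_gt1 q_gt1 femb Vl.
  exists (l, m, side f true); last by rewrite /sides /placement_sides eV.
  by rewrite /placements inE /= lm eU card_side /=.
rewrite /placements inE /= => /and3P[lm Aml /eqP cardA].
have disj : [disjoint A & pts l :\: pts m].
  by move: Aml; rewrite subsetD => /andP[_]; apply: disjointWr; apply: subsetDl.
have ml : m != l by rewrite eq_sym.
have [f [finj eU eV]] := exists_sides cardA (card_ptsD ml) disj.
exists f; last by rewrite /sides eU eV.
by apply/embeddingP; apply: (placement_embedding (l := l) (m := m) finj); rewrite ?eU ?eV.
Qed.

Lemma n_pi_Kbip_placements n : 1 < n -> 1 < q ->
  V_collinear n ->
  n_pi inc (Kbip n q) = #|placement_sides @: placements n|.
Proof.
move=> n_gt1 q_gt1 colV; rewrite -sides_embeddings //.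
by apply: card_orbits => f; rewrite inE => /andP[/injectiveP].
Qed.

Lemma setD_line_eq l m l' m' : 1 < q -> l != m ->
  pts l :\: pts m = pts l' :\: pts m' -> l = l'.
Proof.
move=> q_gt1 lm e; apply: (line_eq_of_subset (A := pts l :\: pts m)).
- by rewrite card_ptsD // eq_sym.
- exact: subsetDl.
- by rewrite e subsetDl.
Qed.

Lemma placement_sides_inj n : 1 < n -> n < q -> {in placements n &, injective placement_sides}.
Proof.
move=> n_gt1 n_lt_q [[l m] A] [[l' m'] A'] /[!inE] /= /and3P[lm Aml /eqP cardA].
case/and3P=> lm' Aml' _; rewrite /placement_sides /=.
case/set2_eq=> [[eA eV] | [eA _]]; last first.
  by move: n_lt_q; rewrite -cardA eA card_ptsD 1?eq_sym // ltnn.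
have Am : A \subset pts m := subset_trans Aml (subsetDl _ _).
have Am' : A \subset pts m' by rewrite eA; apply: subset_trans Aml' (subsetDl _ _).
by rewrite (line_eq_of_subset _ Am Am') ?cardA // (setD_line_eq _ lm eV) ?eA //; lia.
Qed.

Lemma card_placement_sides_q : 1 < q -> #|placement_sides @: placements q| = 'C(#|L|, 2).
Proof.
move=> q_gt1; rewrite -card_draws.
have placementE x : x \in placements q -> x.2 = pts x.1.2 :\: pts x.1.1.
  case: x => [[l m] A]; rewrite inE /= => /and3P[lm Aml /eqP cardA].
  by apply/eqP; rewrite eqEcard Aml cardA card_ptsD /=.
transitivity #|(fun x : L * L * {set P} => [set x.1.1; x.1.2]) @: placements q|.
  apply: card_imset_same_kernel => x y xP yP.
  rewrite /placement_sides (placementE x xP) (placementE y yP).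
  move: xP yP; case: x => [[l m] A]; case: y => [[l' m'] A'] /[!inE] /=.
  move=> /andP[lm _] /andP[lm' _].
  have ml : m != l by rewrite eq_sym.
  apply/eqP/eqP => /set2_eq[[e1 e2] | [e1 e2]].
  - by rewrite (setD_line_eq q_gt1 lm e2) (setD_line_eq q_gt1 ml e1).
  - by rewrite (setD_line_eq q_gt1 lm e2) (setD_line_eq q_gt1 ml e1) setUC.
  - by rewrite e1 e2.
  - by rewrite e1 e2 setUC.
apply: eq_card => S; rewrite inE; apply/imsetP/cards2P => [[[[l m] A]] | [l [m [lm ->]]]].
  by rewrite inE /= => /andP[lm _] ->; exists l, m.
exists (l, m, pts m :\: pts l) => //.
by rewrite inE /= lm subxx card_ptsD /=.
Qed.

Lemma embeddings_V_collinear n : 1 < n -> 1 < q -> q <= n.+1 -> V_collinear n.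
Proof. by move=> n_gt1 q_gt1 q_le f /embeddingP; apply: embedding_V_collinear. Qed.

Lemma n_pi_Kbip_qq : 1 < q -> n_pi inc (Kbip q q) = 'C(#|L|, 2).
Proof.
move=> q_gt1; rewrite n_pi_Kbip_placements ?card_placement_sides_q //.
exact: embeddings_V_collinear.
Qed.

Lemma n_pi_Kbip_lt n : 1 < n -> n < q ->
  V_collinear n ->
  n_pi inc (Kbip n q) = #|L| * #|L|.-1 * 'C(q, n).
Proof.
move=> n_gt1 n_lt_q colV.
rewrite n_pi_Kbip_placements ?card_in_imset ?card_placements //.
  exact: placement_sides_inj.
exact: ltn_trans n_lt_q.
Qed.

End ProjectivePlane.

Lemma mul2_bin2 N : 2 * 'C(N, 2) = N * N.-1.
Proof. by rewrite mulnC -[2]/(2`!) bin_ffact ffactnS ffactn1. Qed.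

Theorem theorem3p5 (q : nat) (P L : finType) (inc : P -> L -> bool) :
  proj_plane q inc ->
  (2 <= q -> n_pi inc (Kbip q q) = 'C(q ^ 2 + q + 1, 2)) /\
  (forall n : nat, 2 <= n -> n < q ->
     (forall f : {ffun ('I_n + 'I_q)%type -> P},
        f \in embeddings inc (Kbip n q) ->
        exists l : L, forall v : 'I_q, inc (f (inr v)) l) ->
     n_pi inc (Kbip n q) = 2 * 'C(q ^ 2 + q + 1, 2) * 'C(q, n)) /\
  (forall n : nat, 2 <= n -> n = q - 1 ->
     (forall f : {ffun ('I_n + 'I_q)%type -> P},
        f \in embeddings inc (Kbip n q) ->
        exists l : L, forall v : 'I_q, inc (f (inr v)) l) /\
     n_pi inc (Kbip n q) = q ^ 2 * (q + 1) * (q ^ 2 + q + 1)).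
Proof.
move=> plane; have cardL := card_lines plane.
split; [|split].
- by move=> q_gt1; rewrite n_pi_Kbip_qq // cardL.
- by move=> n n_gt1 n_lt_q colV; rewrite n_pi_Kbip_lt // cardL mul2_bin2.
move=> n n_gt1 n_eq; have q_gt1 : 1 < q by lia.
have colV : V_collinear q inc n by apply: (embeddings_V_collinear plane); lia.
split=> //; rewrite n_pi_Kbip_lt //; last by lia.
by rewrite cardL n_eq bin_sub ?bin1; [nia | lia].
Qed.
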